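(* Let $i\colon\mathcal{A}\to\mathcal{B}$ be an injective closed homomorphism of complete topological rings and let $S$ be a multiplicatively closed subset of $\mathcal{A}$. Then $\widehat{S^{-1}i}\colon\widehat{S^{-1}\mathcal{A}}\to\widehat{i(S)^{-1}\mathcal{B}}$ is an injective homomorphism of topological rings.
   Context: Topological rings are linearly topologized with a countable fundamental system of open ideals; homomorphisms are continuous; complete means the canonical map to $\varprojlim_{\mathfrak{a}}\mathcal{A}/\mathfrak{a}$ (open ideals, discrete quotients) is a topological isomorphism. A multiplicatively closed subset contains $1$ and is stable under multiplication. The separated completed localization $\widehat{S^{-1}\mathcal{A}}$ is the separated completion of $S^{-1}\mathcal{A}$ for the linear topology with fundamental system of ideals $S^{-1}\mathfrak{a}$, $\mathfrak{a}$ open in $\mathcal{A}$, with canonical map $\tilde j_{\mathcal{A}}\colon\mathcal{A}\to\widehat{S^{-1}\mathcal{A}}$ (similarly $\tilde j_{\mathcal{B}}\colon\mathcal{B}\to\widehat{i(S)^{-1}\mathcal{B}}$). $\widehat{S^{-1}i}$ is the unique continuous ring homomorphism with $\widehat{S^{-1}i}\circ\tilde j_{\mathcal{A}}=\tilde j_{\mathcal{B}}\circ i$. *)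

From HB Require Import structures.
From mathcomp Require Import all_boot all_order all_algebra.
Set Implicit Arguments. Unset Strict Implicit. Unset Printing Implicit Defensive.
Import GRing.Theory.
Local Open Scope ring_scope.

(* A linearly topologized commutative ring with a countable fundamental system
   of open ideals is modelled by a commutative ring R together with a
   decreasing sequence a : nat -> (R -> Prop) of ideals; the topology is the
   one for which {a n} is a fundamental system of neighbourhoods of 0
   (every open ideal contains some a n, and every a n is open). *)
Definition ideal_fund_system (R : comPzRingType) (a : nat -> R -> Prop) : Prop :=
  forall n,
  [/\ a n 0,
      (forall x y, a n x -> a n y -> a n (x - y)),
      (forall r x, a n x -> a n (r * x)) &
      (forall x, a n.+1 x -> a n x)].

(* Completeness: the canonical map R -> lim_n R / a n is bijective
   (it is then automatically a topological isomorphism).  An element of the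
   inverse limit is given by representatives x n with x m - x n \in a n
   for n <= m. *)
Definition lt_complete (R : comPzRingType) (a : nat -> R -> Prop) : Prop :=
  forall x : nat -> R,
    (forall n m, (n <= m)%N -> a n (x m - x n)) ->
    exists! y : R, forall n, a n (y - x n).

Definition lt_continuous (A B : comPzRingType) (a : nat -> A -> Prop)
  (b : nat -> B -> Prop) (f : A -> B) : Prop :=
  forall m, exists n, forall x, a n x -> b m (f x).

Definition lt_closed (R : comPzRingType) (a : nat -> R -> Prop) (C : R -> Prop) :=
  forall y, (forall n, exists c, C c /\ a n (y - c)) -> C y.

Definition lt_closed_map (A B : comPzRingType) (a : nat -> A -> Prop)
  (b : nat -> B -> Prop) (f : A -> B) : Prop :=
  forall C, lt_closed a C -> lt_closed b (fun y => exists x, C x /\ y = f x).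

Definition mult_closed (R : comPzRingType) (S : R -> Prop) : Prop :=
  S 1 /\ forall x y, S x -> S y -> S (x * y).

Definition image_set (A B : Type) (f : A -> B) (S : A -> Prop) : B -> Prop :=
  fun y => exists s, S s /\ y = f s.

(* x/s - y/u = (x u - y s)/(s u) *)
Definition frac_sub (R : comPzRingType) (p q : R * R) : R * R :=
  (p.1 * q.2 - q.1 * p.2, p.2 * q.2).

(* The fraction p = x/s lies in the ideal S^{-1} I of S^{-1} R:
   x/s = y/u with y \in I, u \in S, i.e. (unfolding) t * x \in I for some t \in S. *)
Definition frac_in (R : comPzRingType) (S : R -> Prop) (I : R -> Prop) (p : R * R) :=
  exists t, S t /\ I (t * p.1).

(* ---- Separated completion of S^{-1}R for the topology {S^{-1} a n}:
   Cauchy sequences of fractions modulo null sequences. *)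
Definition frac_cauchy (R : comPzRingType) (S : R -> Prop) (a : nat -> R -> Prop)
  (c : nat -> R * R) : Prop :=
  (forall k, S (c k).2) /\
  forall n, exists N, forall k l, (N <= k)%N -> (N <= l)%N ->
    frac_in S (a n) (frac_sub (c k) (c l)).

(* eventually in S^{-1} a n (the n-th open ideal of the completion) *)
Definition frac_ev_in (R : comPzRingType) (S : R -> Prop) (I : R -> Prop)
  (c : nat -> R * R) : Prop :=
  exists N, forall k, (N <= k)%N -> frac_in S I (c k).

Definition frac_null (R : comPzRingType) (S : R -> Prop) (a : nat -> R -> Prop)
  (c : nat -> R * R) : Prop := forall n, frac_ev_in S (a n) c.

Definition compl_eq (R : comPzRingType) (S : R -> Prop) (a : nat -> R -> Prop)
  (c c' : nat -> R * R) : Prop :=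
  frac_null S a (fun k => frac_sub (c k) (c' k)).

(* S^{-1} i on representatives, extended termwise to Cauchy sequences:
   this is hat(S^{-1} i) on the completion. *)
Definition frac_map (A B : Type) (f : A -> B) (c : nat -> A * A) : nat -> B * B :=
  fun k => (f (c k).1, f (c k).2).

From mathcomp Require Import all_boot all_order all_algebra.
From Stdlib Require Import Classical FunctionalExtensionality.
Local Open Scope ring_scope.
Import GRing.Theory.

Set Implicit Arguments.
Unset Printing Implicit Defensive.

(* The completed map acts termwise on Cauchy sequences of fractions, and [i]
   sends [S^{-1} a_n] into [i(S)^{-1} b_m] as soon as [i(a_n)] lies in [b_m];
   so well-definedness and continuity come from continuity of [i].
   Injectivity needs the converse, [i^{-1}(b_m) ⊆ a_n] for some [m], i.e. that
   [i] is a topological embedding: the complement of the open ideal [a_n] is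
   closed, its image under the closed map [i] is closed and misses [0 = i 0]
   by injectivity, hence is disjoint from some [b_m].  If [i t * i x] lies in
   [b_m] with [t ∈ S], then so does [i (t * x)], whence [t * x ∈ a_n]. *)

Section IdealFundSystem.

Variables (R : comPzRingType) (a : nat -> R -> Prop).
Hypothesis ha : ideal_fund_system a.

Lemma ideal_fund_system0 n : a n 0.
Proof. by have [] := ha n. Qed.

Lemma ideal_fund_systemB n x y : a n x -> a n y -> a n (x - y).
Proof. by have [_ aB _ _] := ha n; apply: aB. Qed.

Lemma ideal_fund_systemN n x : a n x -> a n (- x).
Proof. by move=> ax; rewrite -sub0r; apply/ideal_fund_systemB/ax/ideal_fund_system0. Qed.

Lemma lt_closed_compl n : lt_closed a (fun x => ~ a n x).
Proof.
move=> y y_lim ay; have [c [not_ac ayc]] := y_lim n.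
by apply: not_ac; rewrite -[c](subKr y); apply: ideal_fund_systemB.
Qed.

End IdealFundSystem.

Lemma closed_injective_embedding (A B : comPzRingType)
    (a : nat -> A -> Prop) (b : nat -> B -> Prop) (f : {additive A -> B}) :
    ideal_fund_system a -> ideal_fund_system b ->
    injective f -> lt_closed_map a b f ->
  forall n, exists m, forall x, b m (f x) -> a n x.
Proof.
move=> ha hb f_inj f_closed n; apply: NNPP => no_m.
have [x [not_ax fx0]] : exists x, ~ a n x /\ 0 = f x.
  apply: (f_closed _ (lt_closed_compl ha n) 0) => m.
  apply: NNPP => no_c; apply: no_m; exists m => x bfx; apply: NNPP => not_ax.
  apply: no_c; exists (f x); split; first by exists x.
  by rewrite sub0r; apply: ideal_fund_systemN.
apply: not_ax; have -> : x = 0 by apply: f_inj; rewrite -fx0 raddf0.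
exact: ideal_fund_system0.
Qed.

Section FracMap.

Variables (A B : comPzRingType) (f : {rmorphism A -> B}) (S : A -> Prop).
Variables (I : A -> Prop) (J : B -> Prop).

Lemma frac_sub_map (p q : A * A) :
  frac_sub (f p.1, f p.2) (f q.1, f q.2) = (f (frac_sub p q).1, f (frac_sub p q).2).
Proof. by rewrite /frac_sub /= rmorphB !rmorphM. Qed.

Lemma frac_map_sub (c c' : nat -> A * A) :
  frac_map f (fun k => frac_sub (c k) (c' k)) =
  (fun k => frac_sub (frac_map f c k) (frac_map f c' k)).
Proof. by apply: functional_extensionality => k; rewrite /frac_map frac_sub_map. Qed.

Lemma frac_in_map p : (forall x, I x -> J (f x)) ->
  frac_in S I p -> frac_in (image_set f S) J (f p.1, f p.2).
Proof.
move=> fIJ [t [St It]]; exists (f t); split; first by exists t.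
by rewrite /= -rmorphM; apply: fIJ.
Qed.

Lemma frac_in_map_inv p : (forall x, J (f x) -> I x) ->
  frac_in (image_set f S) J (f p.1, f p.2) -> frac_in S I p.
Proof.
move=> fJI [_ [[t [St ->]] Jt]]; exists t; split => //.
by apply: fJI; rewrite rmorphM.
Qed.

Lemma frac_ev_in_map c : (forall x, I x -> J (f x)) ->
  frac_ev_in S I c -> frac_ev_in (image_set f S) J (frac_map f c).
Proof. by move=> fIJ [N cI]; exists N => k kN; apply/frac_in_map/cI. Qed.

Lemma frac_ev_in_map_inv c : (forall x, J (f x) -> I x) ->
  frac_ev_in (image_set f S) J (frac_map f c) -> frac_ev_in S I c.
Proof. by move=> fJI [N cJ]; exists N => k kN; exact: frac_in_map_inv fJI (cJ k kN). Qed.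

End FracMap.

Theorem lemma1p21 (A B : comPzRingType)
  (a : nat -> A -> Prop) (b : nat -> B -> Prop)
  (ha : ideal_fund_system a) (hb : ideal_fund_system b)
  (hAc : lt_complete a) (hBc : lt_complete b)
  (i : {rmorphism A -> B})
  (hi_cont : lt_continuous a b i)
  (hi_inj : injective i)
  (hi_closed : lt_closed_map a b i)
  (S : A -> Prop) (hS : mult_closed S) :
  let iS := image_set i S in
  [/\ (* hat(S^{-1} i) is well defined on the completion *)
      (forall c, frac_cauchy S a c -> frac_cauchy iS b (frac_map i c)),
      (forall c c', frac_cauchy S a c -> frac_cauchy S a c' ->
         compl_eq S a c c' -> compl_eq iS b (frac_map i c) (frac_map i c')),
      (* it is continuous *)
      (forall m, exists n, forall c, frac_cauchy S a c ->
         frac_ev_in S (a n) c -> frac_ev_in iS (b m) (frac_map i c)) &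
      (* and injective *)
      (forall c c', frac_cauchy S a c -> frac_cauchy S a c' ->
         compl_eq iS b (frac_map i c) (frac_map i c') -> compl_eq S a c c')].
Proof.
move=> iS; have i_emb := closed_injective_embedding i ha hb hi_inj hi_closed.
split.
- move=> c [cS c_cauchy]; split=> [k|m]; first by exists (c k).2.
  have [n ian] := hi_cont m; have [N cN] := c_cauchy n.
  exists N => k l kN lN; rewrite /frac_map frac_sub_map.
  exact: frac_in_map ian (cN k l kN lN).
- move=> c c' _ _ cc' m; have [n ian] := hi_cont m.
  by rewrite /compl_eq -frac_map_sub; apply: frac_ev_in_map ian (cc' n).
- move=> m; have [n ian] := hi_cont m.
  by exists n => c _; apply: frac_ev_in_map.
- move=> c c' _ _ icc' n; have [m ibm] := i_emb n.
  apply: frac_ev_in_map_inv ibm _; rewrite frac_map_sub; exact: icc'.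
Qed.
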